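(* Let $G=(V,E)$ be a finite directed graph and $v_g\in V$ such that every vertex $v\in V$ has a directed path to $v_g$. Let $E'$ be $E$ with all edges out of $v_g$ removed, and build the environment $\mathcal{G}=(\mathcal{S},\mathcal{E})$ with $\mathcal{S}=V\cup\{s_f\}$ ($s_f$ a new vertex), $s_0:=v_g$, and $\mathcal{E}=\{(w\to u):(u\to w)\in E'\}\cup\{(s\to s_f): s\in V\}$. Then $\mathcal{G}$ is a GFlowNet environment with terminal set $\mathcal{X}=V$, and in $\mathcal{G}$ the quantity $\ell(v)$ equals the distance $d_G(v,v_g)$ from $v$ to $v_g$ in $G$. Let $\mathcal{R}:V\to(0,\infty)$ be arbitrary with $\mathcal{Z}=\sum_{v\in V}\mathcal{R}(v)$, and let $P_B$ be a backward policy on $\mathcal{G}$ with $\mathbb{E}[n_\tau]<\infty$ that minimizes $\mathbb{E}[n_\tau]$ among all backward policies satisfying $P_B(v\mid s_f)=\mathcal{R}(v)/\mathcal{Z}$ for all $v\in V$ and having finite $\mathbb{E}[n_\tau]$. Then for every $v\in V$, every sequence $v=u_0,u_1,\dots,u_k=v_g$ with $u_1,\dots,u_{k-1}\ne v_g$ and $\prod_{i=1}^{k}P_B(u_i\mid u_{i-1})>0$ is a shortest directed path from $v$ to $v_g$ in $G$ (i.e. each $(u_{i-1}\to u_i)\in E$ and $k=d_G(v,v_g)$). In particular, for uniform reward $\mathcal{R}\equiv1$ the minimal value is $\mathbb{E}[n_\tau]=\frac{1}{|V|}\sum_{v\in V}d_G(v,v_g)$.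
   Context: A GFlowNet environment is a finite directed graph $\mathcal{G}=(\mathcal{S},\mathcal{E})$ (possibly containing cycles) with a distinguished initial state $s_0$ having no incoming edges and a distinguished sink state $s_f$ having no outgoing edges, such that every state $s\in\mathcal{S}$ is reachable by a directed path from $s_0$ and $s_f$ is reachable by a directed path from $s$. A trajectory is a finite sequence $\tau=(s_0\to s_1\to\dots\to s_{n_\tau}\to s_f)$ with each consecutive pair an edge of $\mathcal{E}$ and $s_1,\dots,s_{n_\tau}\notin\{s_0,s_f\}$; $n_\tau\ge0$ is its length. The terminal states are $\mathcal{X}=\{s:(s\to s_f)\in\mathcal{E}\}$. For $s\in\mathcal{S}$, $\ell(s)$ denotes the number of edges in a shortest directed path from $s_0$ to $s$ in $\mathcal{G}$. A backward policy $P_B$ assigns to each $s'\in\mathcal{S}\setminus\{s_0\}$ a probability distribution $P_B(\cdot\mid s')$ on its parents $\{s:(s\to s')\in\mathcal{E}\}$ (zero probabilities allowed). It defines a Markov chain $X_0=s_f$, $\Pr[X_t=s\mid X_{t-1}=s']=P_B(s\mid s')$, with $s_0$ absorbing; letting $T$ be the hitting time of $s_0$, set $n_\tau=T-1$ (with $n_\tau=\infty$ if $s_0$ is never hit), and $\mathbb{E}[n_\tau]$ is its expectation. $d_G(v,v_g)$ is the number of edges in a shortest directed path from $v$ to $v_g$ in $G$. *)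

From HB Require Import structures.
From mathcomp Require Import all_boot all_order all_algebra.
From mathcomp Require Import all_classical all_reals all_analysis.
Set Implicit Arguments. Unset Strict Implicit. Unset Printing Implicit Defensive.
Import Order.TTheory GRing.Theory Num.Theory.
Local Open Scope ring_scope.

Section Graphs.
Variable T : finType.
Variable e : rel T.

Definition walk_len (x y : T) (n : nat) : bool :=
  [exists p : n.-tuple T, path e x p && (last x p == y)].

Lemma connect_walk_len x y : connect e x y -> exists n, walk_len x y n.
Proof.
case/connectP => p pth ->; exists (size p); apply/existsP.
by exists (in_tuple p); rewrite /= pth eqxx.
Qed.

(* number of edges of a shortest directed path from x to y
   (convention: 0 if y is unreachable from x; never used in that case) *)
Definition dist (x y : T) : nat :=
  match @idP (connect e x y) with
  | ReflectT H => ex_minn (connect_walk_len H)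
  | ReflectF _ => 0
  end.
End Graphs.

Definition gfn_env (S : finType) (E : rel S) (s0 sf : S) : Prop :=
  [/\ s0 != sf,
      forall s, ~~ E s s0,
      forall s, ~~ E sf s,
      forall s, connect E s0 s &
      forall s, connect E s sf].

Definition terminals (S : finType) (E : rel S) (sf : S) : {set S} :=
  [set s | E s sf].

Definition ell (S : finType) (E : rel S) (s0 s : S) : nat := dist E s0 s.

(* P s s' stands for P_B(s | s').  A backward policy gives, for every s' <> s0,
   a probability distribution supported on the parents of s'; probabilities
   of non-parents are 0 (in particular P_B(. | s0) = 0 since s0 has no parents). *)
Definition backward_policy (R : realType) (S : finType) (E : rel S) (s0 : S)
  (P : S -> S -> R) : Prop :=
  [/\ forall s s', 0 <= P s s',
      forall s s', ~~ E s s' -> P s s' = 0 &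
      forall s', s' != s0 -> \sum_(s : S) P s s' = 1].

Fixpoint path_weight (R : realType) (S : finType) (P : S -> S -> R) (x : S)
  (p : seq S) : R :=
  match p with
  | [::] => 1
  | y :: q => P y x * path_weight P y q
  end.

(* Pr[T = t] for the chain X_0 = sf, X_i ~ P_B(. | X_{i-1}), T = hitting time of s0 *)
Definition hit_prob (R : realType) (S : finType) (P : S -> S -> R) (s0 sf : S)
  (t : nat) : R :=
  \sum_(p : t.-tuple S | (last sf p == s0) && (s0 \notin take t.-1 p))
     path_weight P sf p.

(* E[n_tau] with n_tau = T - 1 (= +oo when s0 is never hit):
   +oo if Pr[T < oo] < 1, otherwise sum_t (t - 1) Pr[T = t]. *)
Definition expected_ntau (R : realType) (S : finType) (P : S -> S -> R)
  (s0 sf : S) : \bar R :=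
  if ((\sum_(t <oo) (hit_prob P s0 sf t)%:E)%E == 1%E)
  then (\sum_(t <oo) ((t.-1)%:R * hit_prob P s0 sf t)%:E)%E
  else (+oo)%E.

(* The environment built from (G = (T, e), v_g):  S = option T, None = s_f,
   Some v = v.  Edge w -> u iff (u -> w) in E' (E minus edges out of v_g),
   plus s -> s_f for every s in V. *)
Definition env_rel (T : finType) (e : rel T) (vg : T) : rel (option T) :=
  fun s s' =>
    match s, s' with
    | Some w, Some u => e u w && (u != vg)
    | Some _, None => true
    | None, _ => false
    end.

Definition optimal_policy (R : realType) (T : finType) (e : rel T) (vg : T)
  (Rw : T -> R) (P : option T -> option T -> R) : Prop :=
  let Z := \sum_(v : T) Rw v in
  let admissible (Q : option T -> option T -> R) :=
    [/\ backward_policy (env_rel e vg) (Some vg) Q,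
        forall v, Q (Some v) None = Rw v / Z &
        (expected_ntau Q (Some vg) None < +oo)%E] in
  admissible P /\
  forall Q, admissible Q ->
    (expected_ntau P (Some vg) None <= expected_ntau Q (Some vg) None)%E.

(* Let k_t(x) be the probability that the backward chain started at x first
   reaches s_0 = v_g after t steps.  Every edge of the environment reverses an
   edge of G, so k_t(v) = 0 for t < d_G(v, v_g), and finiteness of E[n_tau]
   forces t |-> k_t(v) to be a probability distribution for every v.  Hence
   E[n_tau] = sum_v R(v)/Z * sum_t t k_t(v) >= sum_v R(v)/Z * d_G(v, v_g),
   with equality for the policy that always steps to a vertex one closer to
   v_g.  A positive-probability path from v of length k > d_G(v, v_g) would
   add at least R(v)/Z * (k - d_G(v, v_g)) * k_k(v) > 0 to this bound,
   contradicting optimality. *)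

From HB Require Import structures.
From mathcomp Require Import all_boot all_order all_algebra.
From mathcomp Require Import all_classical all_reals all_analysis.
From mathcomp Require Import zify.
Import Order.TTheory GRing.Theory Num.Theory.
Set Implicit Arguments. Unset Strict Implicit. Unset Printing Implicit Defensive.
Local Open Scope ring_scope.

Section Distance.
Variables (T : finType) (e : rel T).

Lemma walk_lenP x y n :
  reflect (exists p : seq T, [/\ size p = n, path e x p & last x p = y])
          (walk_len e x y n).
Proof.
apply: (iffP existsP) => [[p /andP[pp /eqP lp]]|[p [sp pp lp]]].
  by exists (val p); rewrite size_tuple.
have sp' : size p == n by rewrite sp.
by exists (Tuple sp'); rewrite /= pp lp eqxx.
Qed.

Lemma walk_len_connect x y n : walk_len e x y n -> connect e x y.
Proof. by case/walk_lenP => p [_ pp lp]; apply/connectP; exists p. Qed.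

Lemma dist_le_walk_len x y n : walk_len e x y n -> (dist e x y <= n)%N.
Proof.
rewrite /dist; case: {-}_ / idP => // H W.
by case: ex_minnP => m _; apply.
Qed.

Lemma walk_len_dist x y : connect e x y -> walk_len e x y (dist e x y).
Proof. by rewrite /dist; case: {-}_ / idP => // H _; case: ex_minnP. Qed.

Lemma dist_path_last x p : path e x p -> (dist e x (last x p) <= size p)%N.
Proof. by move=> pp; apply: dist_le_walk_len; apply/walk_lenP; exists p. Qed.

Lemma distxx x : dist e x x = 0%N.
Proof. by apply/eqP; rewrite -leqn0 (dist_path_last (x := x) (p := [::])). Qed.

Lemma dist_eq0 x y : connect e x y -> (dist e x y == 0%N) = (x == y).
Proof.
move=> cxy; apply/eqP/eqP => [d0|->]; last exact: distxx.
have := walk_len_dist cxy; rewrite d0 => /walk_lenP[p [sp _ <-]].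
by case: p sp.
Qed.

Lemma dist_le_step x y z : e x y -> connect e y z ->
  (dist e x z <= (dist e y z).+1)%N.
Proof.
move=> exy /walk_len_dist/walk_lenP[p [sp pp lp]].
by apply: dist_le_walk_len; apply/walk_lenP; exists (y :: p); rewrite /= exy pp sp lp.
Qed.

Lemma dist_descent x z : connect e x z -> x != z ->
  exists2 y, e x y & dist e y z = (dist e x z).-1.
Proof.
move=> cxz xz; have /walk_lenP[[|y q] [/= sp pp lp]] := walk_len_dist cxz.
  by move: lp xz => /= ->; rewrite eqxx.
move: pp lp => /= /andP[exy pq] lp.
have cyz : connect e y z by apply/connectP; exists q.
have := dist_le_step exy cyz; have := dist_path_last pq; rewrite lp.
by exists y => //; lia.
Qed.

End Distance.

Section TupleSums.
Variables (V : nmodType) (S : finType).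

Lemma big_tuple0 (F : seq S -> V) : \sum_(p : 0.-tuple S) F p = F [::].
Proof. by rewrite (big_pred1 [tuple]) // => p; apply/esym/eqP/tuple0. Qed.

Lemma big_tuple_cons t (F : seq S -> V) :
  \sum_(p : t.+1.-tuple S) F p = \sum_(y : S) \sum_(q : t.-tuple S) F (y :: q).
Proof.
rewrite pair_big /=.
rewrite (reindex (fun yq : S * t.-tuple S => [tuple of yq.1 :: yq.2])) //=.
exists (fun p : t.+1.-tuple S => (thead p, [tuple of behead p])).
  by move=> [y q] _ /=; congr pair; apply: val_inj.
by move=> p _; apply: val_inj => /=; rewrite [in RHS](tuple_eta p).
Qed.

Lemma big_option (F : option S -> V) :
  \sum_(y : option S) F y = F None + \sum_(v : S) F (Some v).
Proof.
rewrite (bigD1 None) //=; congr (_ + _).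
rewrite (reindex_omap (@Some S) id) => [|[]//]; by apply: eq_bigl => v; rewrite eqxx.
Qed.

End TupleSums.

Section FirstHit.
Variables (R : realType) (S : finType) (P : S -> S -> R) (s0 : S).

(* The law of the hitting time of [s0] for the chain with kernel [P y x]
   started at [x]. *)
Fixpoint first_hit (t : nat) (x : S) : R :=
  if t is t'.+1 then
    if x == s0 then 0 else \sum_(y : S) P y x * first_hit t' y
  else (x == s0)%:R.

Hypothesis P_s0 : forall y, P y s0 = 0.

Lemma sum_path_weight_first_hit t x :
  \sum_(p : t.-tuple S | (last x p == s0) && (s0 \notin take t.-1 p))
     path_weight P x p = first_hit t x.
Proof.
pose F n x (p : seq S) :=
  if (last x p == s0) && (s0 \notin take n p) then path_weight P x p else 0.
elim: t x => [|t IH] x; rewrite big_mkcond /=.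
  by rewrite (big_tuple0 (F 0%N x)) /F /= andbT; case: (x == s0).
rewrite (big_tuple_cons _ (F t x)).
have [->|xs0] := eqVneq x s0.
  by rewrite big1 // => y _; rewrite big1 // => q _; rewrite /F; case: ifP; rewrite //= P_s0 mul0r.
apply: eq_bigr => y _; case: t IH => [|t] IH.
  rewrite (big_tuple0 (fun p => F 0%N x (y :: p))) /F /= andbT.
  by case: (y == s0); rewrite ?mulr1 ?mulr0.
have [->|ys0] := eqVneq y s0.
  by rewrite /= eqxx mulr0 big1 // => q _; rewrite /F /= in_cons eqxx andbF.
rewrite -IH big_distrr /= [RHS]big_mkcond; apply: eq_bigr => q _.
by rewrite /F /= in_cons (eq_sym s0) (negbTE ys0); case: ifP.
Qed.

Hypothesis P_ge0 : forall y x, 0 <= P y x.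
Hypothesis P_sum : forall x, x != s0 -> \sum_(y : S) P y x = 1.

Lemma path_weight_ge0 x p : 0 <= path_weight P x p.
Proof. by elim: p x => [|y p IH] x /=; [exact: ler01 | exact: mulr_ge0]. Qed.

Lemma first_hit_ge0 t x : 0 <= first_hit t x.
Proof.
elim: t x => [|t IH] x /=; first by case: (x == s0).
by case: ifP => // _; apply: sumr_ge0 => y _; apply: mulr_ge0.
Qed.

Lemma sum_first_hit_le1 N x : \sum_(t < N) first_hit t x <= 1.
Proof.
elim: N x => [|N IH] x; first by rewrite big_ord0.
rewrite big_ord_recl /=; have [_|xs0] := eqVneq x s0; first by rewrite big1 ?addr0.
rewrite add0r exchange_big /= -(P_sum xs0); apply: ler_sum => y _.
by rewrite -mulr_sumr ler_piMr.
Qed.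

End FirstHit.

Section Environment.
Variables (T : finType) (e : rel T) (vg : T).
Hypothesis Hreach : forall v : T, connect e v vg.
Local Notation E := (env_rel e vg).
Local Notation d v := (dist e v vg).

Lemma env_walk_len_dist v : walk_len E (Some vg) (Some v) (d v).
Proof.
suff: forall n v, d v = n -> walk_len E (Some vg) (Some v) n by apply.
elim=> [|n IH] {}v dv.
  move/eqP: dv; rewrite (dist_eq0 (Hreach v)) => /eqP->.
  by apply/walk_lenP; exists [::].
have vvg : v != vg by rewrite -(dist_eq0 (Hreach v)) dv.
have [w evw] := dist_descent (Hreach v) vvg; rewrite dv => /IH /walk_lenP[p [sp pp lp]].
apply/walk_lenP; exists (rcons p (Some v)).
by rewrite size_rcons sp rcons_path pp lp /= evw vvg last_rcons.
Qed.

Lemma env_walk_len_rev p a u :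
  path E (Some a) p -> last (Some a) p = Some u -> walk_len e u a (size p).
Proof.
elim: p a => [|[b|] q IH] a /=; first by move=> _ [->]; apply/walk_lenP; exists [::].
  move=> /andP[/andP[eba _] pq] /(IH b pq) /walk_lenP[r [sr pr lr]].
  apply/walk_lenP; exists (rcons r a).
  by rewrite size_rcons sr rcons_path pr lr eba last_rcons.
by clear IH; case: q.
Qed.

Lemma env_dist v : dist E (Some vg) (Some v) = d v.
Proof.
have W := env_walk_len_dist v.
apply/eqP; rewrite eqn_leq dist_le_walk_len //=.
have /walk_lenP[p [<- pp lp]] := walk_len_dist (walk_len_connect W).
exact/dist_le_walk_len/(env_walk_len_rev pp lp).
Qed.

Lemma env_gfn_env : gfn_env E (Some vg) None.
Proof.
split => //.
- by case => // w /=; rewrite eqxx andbF.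
- by case => [v|]; [exact: walk_len_connect (env_walk_len_dist v) | exact: connect1].
- by case => [v|] //; apply: connect1.
Qed.

Lemma env_terminals : terminals E None = [set Some v | v in T].
Proof.
apply/setP => -[v|]; rewrite !inE /=; apply/esym/imsetP; first by exists v.
by case.
Qed.

Section Policy.
Variables (R : realType) (P : option T -> option T -> R).
Hypothesis HP : backward_policy E (Some vg) P.

Lemma policy_ge0 y x : 0 <= P y x.
Proof. by case: HP. Qed.

Lemma policy_edge y x : P y x != 0 -> E y x.
Proof. by case: HP => _ P0 _; apply: contraR => /P0 ->. Qed.

Lemma policy_s0 y : P y (Some vg) = 0.
Proof. by case: HP => _ P0 _; apply: P0; case: y => //= w; rewrite eqxx andbF. Qed.

Lemma policy_sum x : x != Some vg -> \sum_y P y x = 1.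
Proof. by case: HP => _ _; apply. Qed.

Lemma policy_first_hit_ge0 t x : 0 <= first_hit P (Some vg) t x.
Proof. exact/first_hit_ge0/policy_ge0. Qed.

Lemma first_hit_neq0_dist t v :
  first_hit P (Some vg) t (Some v) != 0 -> (d v <= t)%N.
Proof.
elim: t v => [|t IH] v /=.
  by rewrite (inj_eq Some_inj) pnatr_eq0 eqb0 negbK => /eqP->; rewrite distxx.
case: ifP => [_|_]; first by rewrite eqxx.
move=> /eqP /eqP; rewrite psumr_eq0 => [/allPn[y _]|y _]; last first.
  by rewrite mulr_ge0 ?policy_ge0 ?policy_first_hit_ge0.
rewrite mulf_eq0 negb_or => /andP[/policy_edge Eyv].
case: y Eyv => [w /andP[evw _] /IH|//].
by have := dist_le_step evw (Hreach w); lia.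
Qed.

Lemma path_weight_le_first_hit v p :
  0 < path_weight P (Some v) (map Some p) -> last v p = vg ->
  path e v p /\ path_weight P (Some v) (map Some p) <= first_hit P (Some vg) (size p) (Some v).
Proof.
elim: p v => [|y q IH] v /=; first by move=> _ ->; rewrite eqxx.
move=> pos lq.
have w0 := path_weight_ge0 policy_ge0 (Some y) (map Some q).
have Pyv : P (Some y) (Some v) != 0 by apply: contraTneq pos => ->; rewrite mul0r ltxx.
have wpos : 0 < path_weight P (Some y) (map Some q).
  by rewrite lt_def w0 andbT; apply: contraTneq pos => ->; rewrite mulr0 ltxx.
have /andP[evy vvg] := policy_edge Pyv.
have [pq le] := IH y wpos lq; split; first by rewrite evy pq.
rewrite (inj_eq Some_inj) (negbTE vvg) (bigD1 (Some y)) //= -[X in X <= _]addr0.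
rewrite lerD ?ler_wpM2l ?policy_ge0 //.
by apply: sumr_ge0 => z _; rewrite mulr_ge0 ?policy_ge0 ?policy_first_hit_ge0.
Qed.

End Policy.

End Environment.

Section NonnegSeries.
Variable R : realType.
Local Open Scope ereal_scope.

Lemma nneseries_drop0 (f : nat -> \bar R) : (forall t, 0 <= f t) -> f 0%N = 0 ->
  \sum_(t <oo) f t = \sum_(t <oo) f t.+1.
Proof.
move=> f0 fz; rewrite nneseries_recl // fz add0e -nneseries_addn //.
by apply: eq_eseriesr => i _; rewrite addn1.
Qed.

Lemma nneseries_delta (c : R) t0 : (0 <= c)%R ->
  \sum_(t <oo) ((t == t0)%:R * c)%:E = c%:E.
Proof.
move=> c0; rewrite (@nneseriesD1 _ _ t0) //; last first.
  by move=> k _; rewrite lee_fin mulr_ge0.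
rewrite eqxx mul1r eseries0 ?adde0 // => i _ /andP[_ /negbTE ->].
by rewrite mul0r.
Qed.

Lemma nneseries_EFinZl (c : R) (f : nat -> R) : (0 <= c)%R -> (forall t, 0 <= f t)%R ->
  \sum_(t <oo) (c * f t)%:E = c%:E * \sum_(t <oo) (f t)%:E.
Proof.
move=> c0 f0; under eq_eseriesr do rewrite EFinM.
by apply: nneseriesZl => i _; rewrite lee_fin.
Qed.

Lemma nneseries_EFin_sum (I : finType) (g : I -> nat -> R) :
  (forall v t, 0 <= g v t)%R ->
  \sum_(t <oo) (\sum_(v : I) g v t)%:E = \sum_(v : I) \sum_(t <oo) (g v t)%:E.
Proof.
move=> g0; under eq_eseriesr do rewrite -sumEFin.
by apply: nneseries_sum => v t _; rewrite lee_fin.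
Qed.

Lemma nneseries_EFin_le (f : nat -> R) (c : R) : (forall t, 0 <= f t)%R ->
  (forall N, \sum_(t < N) f t <= c)%R -> \sum_(t <oo) (f t)%:E <= c%:E.
Proof.
move=> f0 fN; apply: lime_le; first by apply: is_cvg_nneseries => n _ _; rewrite lee_fin.
by near=> n; rewrite sumEFin lee_fin big_mkord.
Unshelve. all: by end_near.
Qed.

End NonnegSeries.

Section Decomposition.
Variables (T : finType) (e : rel T) (vg : T) (R : realType).
Hypothesis Hreach : forall v : T, connect e v vg.
Variable Rw : T -> R.
Hypothesis Rw_gt0 : forall v, 0 < Rw v.
Local Notation E := (env_rel e vg).
Local Notation d v := (dist e v vg).
Local Notation Z := (\sum_(v : T) Rw v).

Lemma reward_total_gt0 : 0 < Z.
Proof. by rewrite (bigD1 vg) //= ltr_wpDr ?Rw_gt0 // sumr_ge0 // => v _; apply/ltW. Qed.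

Lemma reward_share_gt0 v : 0 < Rw v / Z.
Proof. by rewrite divr_gt0 ?reward_total_gt0. Qed.

Lemma sum_reward_share : \sum_(v : T) Rw v / Z = 1.
Proof. by rewrite -mulr_suml divff // gt_eqF // reward_total_gt0. Qed.

Section Policy.
Variable P : option T -> option T -> R.
Hypothesis HP : backward_policy E (Some vg) P.
Hypothesis P_sf : forall v, P (Some v) None = Rw v / Z.
Local Notation k := (first_hit P (Some vg)).
Let k_ge0 := policy_first_hit_ge0 HP.

Lemma hit_prob_env t : hit_prob P (Some vg) None t =
  if t is t'.+1 then \sum_(v : T) Rw v / Z * k t' (Some v) else 0.
Proof.
rewrite /hit_prob sum_path_weight_first_hit; last exact: (policy_s0 HP).
case: t => [|t] //=; rewrite big_option /=.
have [_ P0 _] := HP; rewrite P0 // mul0r add0r.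
by apply: eq_bigr => v _; rewrite P_sf.
Qed.

Lemma hit_prob_ge0 t : 0 <= hit_prob P (Some vg) None t.
Proof. by rewrite /hit_prob sum_path_weight_first_hit ?k_ge0 //; apply: (policy_s0 HP). Qed.

Lemma sum_hit_prob_env : (\sum_(t <oo) (hit_prob P (Some vg) None t)%:E)%E =
  (\sum_(v : T) (Rw v / Z)%:E * \sum_(t <oo) (k t (Some v))%:E)%E.
Proof.
rewrite nneseries_drop0 => [|t|]; last 2 first.
- by rewrite lee_fin hit_prob_ge0.
- by rewrite hit_prob_env.
under eq_eseriesr do rewrite hit_prob_env.
rewrite nneseries_EFin_sum => [|v t]; last by rewrite mulr_ge0 ?k_ge0 ?(ltW (reward_share_gt0 v)).
apply: eq_bigr => v _; rewrite nneseries_EFinZl ?(ltW (reward_share_gt0 v)) // => t; exact: k_ge0.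
Qed.

Lemma sum_ntau_hit_prob_env :
  (\sum_(t <oo) ((t.-1)%:R * hit_prob P (Some vg) None t)%:E)%E =
  (\sum_(v : T) (Rw v / Z)%:E * \sum_(t <oo) (t%:R * k t (Some v))%:E)%E.
Proof.
rewrite nneseries_drop0 => [|t|]; last 2 first.
- by rewrite lee_fin mulr_ge0 ?hit_prob_ge0.
- by rewrite mul0r.
under eq_eseriesr do rewrite hit_prob_env /= mulr_sumr.
rewrite nneseries_EFin_sum => [|v t]; last first.
  by apply: mulr_ge0 => //; apply: mulr_ge0; [exact: ltW (reward_share_gt0 v) | exact: k_ge0].
apply: eq_bigr => v _; rewrite -nneseries_EFinZl => [||t].
- by apply: eq_eseriesr => t _; rewrite mulrCA.
- exact: ltW (reward_share_gt0 v).
- exact: mulr_ge0 (ler0n _ _) (k_ge0 _ _).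
Qed.

Lemma hit_mass_le1 v : (\sum_(t <oo) (k t (Some v))%:E <= 1)%E.
Proof.
apply: nneseries_EFin_le => [t|N]; first exact: k_ge0.
exact: sum_first_hit_le1 (policy_ge0 HP) (policy_sum HP) N (Some v).
Qed.

Hypothesis P_fin : (expected_ntau P (Some vg) None < +oo)%E.

Lemma sum_hit_prob_eq1 : (\sum_(t <oo) (hit_prob P (Some vg) None t)%:E)%E = 1%E.
Proof. by move: P_fin; rewrite /expected_ntau; case: eqP => // _; rewrite ltxx. Qed.

Lemma expected_ntau_env : expected_ntau P (Some vg) None =
  (\sum_(v : T) (Rw v / Z)%:E * \sum_(t <oo) (t%:R * k t (Some v))%:E)%E.
Proof. by rewrite /expected_ntau sum_hit_prob_eq1 eqxx sum_ntau_hit_prob_env. Qed.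

Lemma hit_mass_eq1 v : (\sum_(t <oo) (k t (Some v))%:E)%E = 1%E.
Proof.
pose M u := (\sum_(t <oo) (k t (Some u))%:E)%E.
have M_fin u : M u = (fine (M u))%:E.
  rewrite fineK // ge0_fin_numE ?(le_lt_trans (hit_mass_le1 u) (ltry _)) //.
  by apply: nneseries_ge0 => n _ _; rewrite lee_fin k_ge0.
have M_le1 u : fine (M u) <= 1 by rewrite -lee_fin -M_fin hit_mass_le1.
have sum_eq1 : \sum_(u : T) Rw u / Z * fine (M u) = 1.
  have := sum_hit_prob_eq1.
  rewrite sum_hit_prob_env (eq_bigr (fun u => (Rw u / Z * fine (M u))%:E)) => [|u _].
    by rewrite sumEFin => -[].
  by rewrite -/(M u) {1}M_fin EFinM.
have defect0 : \sum_(u : T) Rw u / Z * (1 - fine (M u)) = 0.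
  rewrite (eq_bigr (fun u => Rw u / Z - Rw u / Z * fine (M u))) => [|u _].
    by rewrite sumrB sum_reward_share sum_eq1 subrr.
  by rewrite mulrBr mulr1.
have defect_ge0 u : 0 <= Rw u / Z * (1 - fine (M u)).
  by rewrite mulr_ge0 ?subr_ge0 ?(ltW (reward_share_gt0 u)).
have /eqP := @psumr_eq0P _ _ _ _ (fun u _ => defect_ge0 u) defect0 v isT.
rewrite mulf_eq0 gt_eqF ?reward_share_gt0 //= subr_eq0 => /eqP M1.
by rewrite -/(M v) M_fin -M1.
Qed.

Lemma hit_mean_ge v t0 :
  (((d v)%:R + (t0%:R - (d v)%:R) * k t0 (Some v))%:E <=
   \sum_(t <oo) (t%:R * k t (Some v))%:E)%E.
Proof.
have k_dist t : k t (Some v) != 0 -> (d v <= t)%N by apply: first_hit_neq0_dist.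
have c_ge0 : 0 <= (t0%:R - (d v)%:R) * k t0 (Some v).
  have [->|/k_dist dt0] := eqVneq (k t0 (Some v)) 0; first by rewrite mulr0.
  by rewrite mulr_ge0 ?k_ge0 // subr_ge0 ler_nat.
set c := (t0%:R - (d v)%:R) * k t0 (Some v) in c_ge0 *.
(* the comparison series sums to d v + c since k (Some v) has mass 1 *)
have -> : ((d v)%:R + c)%:E =
    (\sum_(t <oo) ((d v)%:R * k t (Some v) + (t == t0)%:R * c)%:E)%E.
  rewrite (eq_eseriesr (fun t _ => EFinD _ _)) nneseriesD => [|t _ _|t _ _].
  - by rewrite EFinD nneseries_delta // nneseries_EFinZl ?hit_mass_eq1 ?mule1 // => t; apply: k_ge0.
  - by rewrite lee_fin mulr_ge0 ?k_ge0.
  - by rewrite lee_fin mulr_ge0.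
apply: lee_nneseries => [t _ _|t _].
  by rewrite lee_fin; apply: addr_ge0; apply: mulr_ge0 => //; apply: k_ge0.
rewrite lee_fin; have [->|tt0] := eqVneq t t0.
  by rewrite mul1r /c -mulrDl addrC subrK.
rewrite mul0r addr0; have [->|/k_dist dt] := eqVneq (k t (Some v)) 0; first by rewrite !mulr0.
by rewrite ler_wpM2r ?k_ge0 ?ler_nat.
Qed.

Lemma expected_ntau_ge v0 t0 :
  ((\sum_(v : T) Rw v / Z * (d v)%:R +
    Rw v0 / Z * ((t0%:R - (d v0)%:R) * k t0 (Some v0)))%:E <=
   expected_ntau P (Some vg) None)%E.
Proof.
have pi_ge0 v : (0 <= (Rw v / Z)%:E)%E by rewrite lee_fin ltW ?reward_share_gt0.
rewrite expected_ntau_env [X in (_ <= X)%E](bigD1 v0) //= (bigD1 v0) //=.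
rewrite -addrA [_ + _ * (_ * _)]addrC addrA -mulrDr EFinD EFinM -sumEFin.
rewrite leeD ?lee_wpmul2l ?hit_mean_ge //.
apply: lee_sum => v _; rewrite EFinM lee_wpmul2l //.
by have := hit_mean_ge v (d v); rewrite subrr mul0r addr0.
Qed.

End Policy.
End Decomposition.

Section ShortestPathPolicy.
Variables (T : finType) (e : rel T) (vg : T) (R : realType).
Hypothesis Hreach : forall v : T, connect e v vg.
Variable Rw : T -> R.
Hypothesis Rw_gt0 : forall v, 0 < Rw v.
Local Notation E := (env_rel e vg).
Local Notation d v := (dist e v vg).
Local Notation Z := (\sum_(v : T) Rw v).

Definition next_hop (u : T) : option T := [pick w | e u w && (d w == (d u).-1)].

Lemma next_hopP u w : next_hop u = Some w -> e u w /\ d w = (d u).-1.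
Proof. by rewrite /next_hop; case: pickP => // w' /andP[euw /eqP dw] [<-]. Qed.

Lemma next_hop_neq_vg u : u != vg -> exists w, next_hop u = Some w.
Proof.
move=> uvg; rewrite /next_hop; case: pickP => [w _|none]; first by exists w.
have [w euw dw] := dist_descent (Hreach u) uvg.
by move: (none w); rewrite euw dw eqxx.
Qed.

Definition shortest_policy (y x : option T) : R :=
  match x, y with
  | None, Some v => Rw v / Z
  | Some u, Some w => ((u != vg) && (next_hop u == Some w))%:R
  | _, _ => 0
  end.

Lemma shortest_policy_backward : backward_policy E (Some vg) shortest_policy.
Proof.
split.
- case=> [w|] [u|] //=; rewrite divr_ge0 ?ltW ?Rw_gt0 ?reward_total_gt0 //.
- move=> [w|] [u|] //=; apply: contraNeq; rewrite pnatr_eq0 eqb0 negbK.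
  by case/andP=> uvg /eqP/next_hopP[-> _].
- move=> [u|] uvg; rewrite big_option /= add0r; last exact: sum_reward_share.
  have {}uvg : u != vg by apply: contraNneq uvg => ->.
  have [w hop] := next_hop_neq_vg uvg; rewrite (bigD1 w) //= uvg hop eqxx big1 ?addr0 //.
  by move=> w' w'w; rewrite (inj_eq Some_inj) eq_sym (negbTE w'w).
Qed.

Lemma first_hit_shortest t v :
  first_hit shortest_policy (Some vg) t (Some v) = (t == d v)%:R.
Proof.
elim: t v => [|t IH] v /=; rewrite (inj_eq Some_inj).
  by rewrite -(dist_eq0 (Hreach v)) eq_sym.
have [->|vvg] := eqVneq v vg; first by rewrite distxx.
have [w hop] := next_hop_neq_vg vvg; have [_ dw] := next_hopP hop.
have dv_gt0 : (0 < d v)%N by rewrite lt0n (dist_eq0 (Hreach v)).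
rewrite big_option /= mul0r add0r (bigD1 w) //= hop eqxx mul1r IH big1 ?addr0.
  by rewrite dw; case: (d v) dv_gt0.
by move=> w' w'w; rewrite /= (inj_eq Some_inj) eq_sym (negbTE w'w) mul0r.
Qed.

Lemma sum_hit_prob_shortest :
  (\sum_(t <oo) (hit_prob shortest_policy (Some vg) None t)%:E)%E = 1%E.
Proof.
rewrite (sum_hit_prob_env Rw_gt0 shortest_policy_backward) //.
rewrite -[1%E]/((1 : R)%:E) -(sum_reward_share vg Rw_gt0) -sumEFin; apply: eq_bigr => v _.
under eq_eseriesr do rewrite first_hit_shortest -[X in X%:E]mulr1.
by rewrite nneseries_delta // mule1.
Qed.

Lemma expected_ntau_shortest : expected_ntau shortest_policy (Some vg) None =
  (\sum_(v : T) Rw v / Z * (d v)%:R)%:E.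
Proof.
rewrite /expected_ntau sum_hit_prob_shortest eqxx.
rewrite (sum_ntau_hit_prob_env Rw_gt0 shortest_policy_backward) // -sumEFin.
apply: eq_bigr => v _; rewrite [RHS]EFinM; congr (_ * _)%E.
under eq_eseriesr do rewrite first_hit_shortest.
rewrite -(nneseries_delta (d v) (ler0n _ _)).
by apply: eq_eseriesr => t _; case: eqP => [->|]; rewrite ?mulr0 ?mul0r ?mulr1 ?mul1r.
Qed.

End ShortestPathPolicy.

Section Optimality.
Variables (T : finType) (e : rel T) (vg : T) (R : realType).
Hypothesis Hreach : forall v : T, connect e v vg.
Variable Rw : T -> R.
Hypothesis Rw_gt0 : forall v, 0 < Rw v.
Variable P : option T -> option T -> R.
Hypothesis P_opt : optimal_policy e vg Rw P.
Local Notation d v := (dist e v vg).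
Local Notation Z := (\sum_(v : T) Rw v).

Lemma optimal_policy_expected_ntau :
  expected_ntau P (Some vg) None = (\sum_(v : T) Rw v / Z * (d v)%:R)%:E.
Proof.
have [[HP P_sf P_fin] P_min] := P_opt.
apply/le_anti/andP; split.
  rewrite -(expected_ntau_shortest Hreach Rw_gt0); apply: P_min.
  by split; [exact: shortest_policy_backward | | rewrite expected_ntau_shortest ?ltry].
have := expected_ntau_ge Hreach Rw_gt0 HP P_sf P_fin vg (d vg).
by rewrite subrr mul0r mulr0 addr0.
Qed.

Lemma optimal_policy_positive_path v p :
  last v p = vg -> 0 < path_weight P (Some v) (map Some p) ->
  path e v p /\ size p = d v.
Proof.
move=> lp w_gt0; have [[HP P_sf P_fin] _] := P_opt.
have [pp w_le] := path_weight_le_first_hit HP w_gt0 lp.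
split => //; apply/eqP; rewrite eqn_leq andbC -{1}lp dist_path_last //=.
have := expected_ntau_ge Hreach Rw_gt0 HP P_sf P_fin v (size p).
rewrite optimal_policy_expected_ntau lee_fin gerDl pmulr_rle0 ?reward_share_gt0 //.
by rewrite pmulr_lle0 ?(lt_le_trans w_gt0 w_le) // subr_le0 ler_nat.
Qed.

End Optimality.

Theorem mainTheorem5 (R : realType) (T : finType) (e : rel T) (vg : T)
  (Hreach : forall v : T, connect e v vg) :
  [/\ gfn_env (env_rel e vg) (Some vg) None
      /\ terminals (env_rel e vg) None = [set Some v | v in T],
      forall v : T, ell (env_rel e vg) (Some vg) (Some v) = dist e v vg,
      forall (Rw : T -> R), (forall v, (0 < Rw v)%R) ->
      forall P : option T -> option T -> R, optimal_policy e vg Rw P ->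
      forall (v : T) (p : seq T),
        last v p = vg -> vg \notin take (size p).-1 p ->
        (0 < path_weight P (Some v) (map Some p))%R ->
        path e v p /\ size p = dist e v vg
    & forall P : option T -> option T -> R,
        optimal_policy e vg (fun _ => 1%R) P ->
        expected_ntau P (Some vg) None
        = (((\sum_(v : T) dist e v vg)%:R / #|T|%:R)%R)%:E].
Proof.
split.
- by split; [exact: env_gfn_env | exact: env_terminals].
- exact: env_dist.
- (* avoiding v_g before the end is automatic: P_B(. | v_g) = 0 *)
  by move=> Rw Rw_gt0 P P_opt v p lp _; apply: optimal_policy_positive_path.
- move=> P P_opt; rewrite (optimal_policy_expected_ntau Hreach (fun _ => ltr01) P_opt).
  rewrite sumr_const natr_sum mulr_suml; congr EFin; apply: eq_bigr => v _.
  by rewrite mul1r mulrC.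
Qed.
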